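(* For every integer $n\ge2$, the coefficient of $u\,v^{n}w^{n-1}$ in $P_{n/(n+1)}(u,v,w)$ (i.e. the coefficient at the lattice point $(1,n)$ of the Newton polygon) equals $4$.
   Context: Markov polynomials. Let $x,y,z$ be indeterminates. Consider the set consisting of all rationals $\rho\in[0,1]$, each written in lowest terms $\rho=a/b$ with integers $a\ge 0$, $b\ge 1$, together with the formal symbol $1/0$. Define Laurent polynomials $M_\rho(x,y,z)$ recursively by $M_{1/0}=y$, $M_{0/1}=x$, $M_{1/1}=\frac{x^2+y^2}{z}$, and: whenever $a/b$, $c/d$ are in this set with $|ad-bc|=1$ and $(a+2c)/(b+2d)\in[0,1]$, then $M_{\frac{a+2c}{b+2d}}=\big(M_{c/d}^2+M_{\frac{a+c}{b+d}}^2\big)/M_{a/b}$. This determines $M_\rho$ for every rational $\rho\in[0,1]$. Numerator. For coprime $1\le a\le b$, $P_{a/b}(u,v,w)$ denotes the homogeneous polynomial of degree $a+b-1$ such that $M_{a/b}(x,y,z)=P_{a/b}(x^2,y^2,z^2)/(x^{a-1}y^{b-1}z^{a+b-1})$; its existence is known. *)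

From HB Require Import structures.
From mathcomp Require Import all_boot all_algebra.
From mathcomp Require Import fraction.
From mathcomp Require Import mpoly.

Set Implicit Arguments. Unset Strict Implicit. Unset Printing Implicit Defensive.
Import GRing.Theory.
Local Open Scope ring_scope.

(* Polynomials in three indeterminates (indices 0,1,2) with integer
   coefficients, and their field of fractions, in which the Laurent
   polynomials M_rho live. *)
Definition mpR := {mpoly int[3]}.
Definition Kfrac := {fraction mpR}.

Definition toK (p : mpR) : Kfrac := @FracField.tofrac mpR p.

Definition xK : Kfrac := toK 'X_(0 : 'I_3).
Definition yK : Kfrac := toK 'X_(1 : 'I_3).
Definition zK : Kfrac := toK 'X_(2 : 'I_3).

(* The index set: a/b with a >= 0, b >= 1, gcd(a,b)=1 and a/b in [0,1],
   together with the formal symbol 1/0 (encoded as the pair (1,0)). *)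
Definition in_markov_set (a b : nat) : bool :=
  [&& (1 <= b)%N, (a <= b)%N & coprime a b] || ((a == 1%N) && (b == 0%N)).

Definition unimodular (a b c d : nat) : Prop :=
  (a * d = b * c + 1)%N \/ (b * c = a * d + 1)%N.

(* M : (numerator, denominator) -> Kfrac satisfies the defining recursion
   of the Markov polynomials M_rho. *)
Definition is_markov_family (M : nat -> nat -> Kfrac) : Prop :=
  [/\ M 1%N 0%N = yK, M 0%N 1%N = xK,
      M 1%N 1%N = (xK ^+ 2 + yK ^+ 2) / zK &
      forall a b c d : nat,
        in_markov_set a b -> in_markov_set c d -> unimodular a b c d ->
        (1 <= b + 2 * d)%N -> (a + 2 * c <= b + 2 * d)%N ->
        M (a + 2 * c)%N (b + 2 * d)%N =
          (M c d ^+ 2 + M (a + c)%N (b + d)%N ^+ 2) / M a b].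

Definition sq_subst : 3.-tuple mpR :=
  [tuple ('X_(0 : 'I_3) : mpR) ^+ 2; ('X_(1 : 'I_3) : mpR) ^+ 2;
         ('X_(2 : 'I_3) : mpR) ^+ 2].

Definition is_markov_numerator (M : nat -> nat -> Kfrac) (a b : nat)
    (P : mpR) : Prop :=
  P \is (a + b - 1)%N.-homog /\
  M a b = toK (P \mPo sq_subst) /
            (xK ^+ (a - 1) * yK ^+ (b - 1) * zK ^+ (a + b - 1)).

From HB Require Import structures.
From mathcomp Require Import all_boot all_algebra.
From mathcomp Require Import fraction.
From mathcomp Require Import mpoly.
From mathcomp Require Import ring zify.
Set Implicit Arguments. Unset Strict Implicit. Unset Printing Implicit Defensive.
Import GRing.Theory.
Local Open Scope ring_scope.

(* Let d_k := x^(k+1) y^k z^(2k), the denominator of M_{k/(k+1)}, and define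
   Q_k by Q_0 = u, Q_1 = u (v^2 + 2uv + uw + u^2) and the linear recurrence
   Q_{k+2} = T Q_{k+1} - W Q_k with T = v^2 + vw + uw + 2uv + u^2, W = uvw^2.
   Its Casoratian Q_{k+2} Q_k - Q_{k+1}^2 = W^k u^2 vw (u+v)^2 becomes, after
   substituting squares, exactly the Markov relation
   M_{(k+2)/(k+3)} M_{k/(k+1)} = M_{1/1}^2 + M_{(k+1)/(k+2)}^2, so that
   M_{k/(k+1)} = Q_k(x^2,y^2,z^2) / d_k, i.e. Q_k = u P_{k/(k+1)}.
   Reading the recurrence coefficientwise: every Q_k is divisible by u, its part
   of u-degree at most 2 (at most 1 when k = 1) has w-degree below k, the
   coefficient of u v^(k+1) w^(k-1) is 1, and the coefficient c_k of
   u^2 v^k w^(k-1) satisfies c_{k+2} = c_{k+1} + 1 - 1, hence c_k = c_2 = 4. *)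

Definition mnm3 (i j l : nat) : 'X_{1..3} := [multinom [tuple i; j; l]].
Definition X3 (i j l : nat) : mpR := 'X_[mnm3 i j l].
Definition coef3 (p : mpR) (i j l : nat) : int := p@_(mnm3 i j l).

Lemma mnm3_eq a b c i j l :
  (mnm3 a b c == mnm3 i j l) = [&& a == i, b == j & c == l].
Proof. by rewrite /mnm3 -val_eqE /= -val_eqE /= !eqseq_cons andbT. Qed.

Lemma mnm3E a b c (x : 'I_3) : mnm3 a b c x = nth 0%N [:: a; b; c] x.
Proof. by rewrite /mnm3 multinomE (tnth_nth 0%N). Qed.

Lemma X3E a b c :
  X3 a b c = 'X_(0 : 'I_3) ^+ a * 'X_(1 : 'I_3) ^+ b * 'X_(2 : 'I_3) ^+ c.
Proof.
rewrite /X3 mpolyXE_id !big_ord_recl big_ord0 mulr1 !mnm3E /= mulrA.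
by congr (_ * 'X_ _ ^+ _ * 'X_ _ ^+ _); apply/val_inj.
Qed.

Lemma coef3X3 a b c i j l :
  coef3 (X3 a b c) i j l = [&& a == i, b == j & c == l]%:R.
Proof. by rewrite /coef3 mcoeffX mnm3_eq. Qed.

Lemma coef3X3_eq0 a b c i j l :
  ~ [/\ a = i, b = j & c = l] -> coef3 (X3 a b c) i j l = 0.
Proof. by move=> neq; rewrite coef3X3; do 3 case: eqP => // ?; case: neq. Qed.

Lemma X3_neq0 a b c : X3 a b c != 0.
Proof.
by apply/eqP => X0; have := coef3X3 a b c a b c; rewrite X0 /coef3 mcoeff0 !eqxx.
Qed.

Lemma coef3D p q i j l : coef3 (p + q) i j l = coef3 p i j l + coef3 q i j l.
Proof. exact: mcoeffD. Qed.

Lemma coef3B p q i j l : coef3 (p - q) i j l = coef3 p i j l - coef3 q i j l.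
Proof. exact: mcoeffB. Qed.

Definition le3 (a b c i j l : nat) : bool := [&& a <= i, b <= j & c <= l]%N.

Lemma coef3_mulX3 p a b c i j l : coef3 (p * X3 a b c) i j l =
  if le3 a b c i j l then coef3 p (i - a) (j - b) (l - c) else 0.
Proof.
rewrite /coef3 /X3 /le3; case: ifP => [/and3P[ai bj cl] | le_abc].
  have -> : mnm3 i j l = (mnm3 a b c + mnm3 (i - a) (j - b) (l - c))%MM.
    by apply/mnmP => -[[|[|[|x]]] hx] //; rewrite mnmDE !mnm3E /=; lia.
  by rewrite mcoeffMX.
apply/eqP; rewrite mcoeff_eq0 (perm_mem (msuppMX _ _)).
apply/mapP => -[m _ /mnmP eq_m]; move: le_abc.
have := eq_m 0; have := eq_m 1; have := eq_m 2.
by rewrite !mnmDE !mnm3E /= => -> -> ->; rewrite !leq_addr.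
Qed.

Lemma if_eq0 (b : bool) (x : int) : (b -> x = 0) -> (if b then x else 0) = 0.
Proof. by case: b => // ->. Qed.

Lemma casoratian_rec2 (R : comRingType) (r : nat -> R) (t w : R) :
    (forall k, r k.+2 = r k.+1 * t - r k * w) ->
  forall k, r k.+2 * r k - r k.+1 ^+ 2 = w ^+ k * (r 2 * r 0 - r 1 ^+ 2).
Proof.
move=> r_rec; elim=> [|k IHk]; first by rewrite mul1r.
by rewrite [w ^+ _]exprS -mulrA -IHk (r_rec k.+1) (r_rec k); ring.
Qed.

Definition Tq : mpR := X3 0 2 0 + X3 0 1 1 + X3 1 0 1 + X3 1 1 0 *+ 2 + X3 2 0 0.
Definition Wq : mpR := X3 1 1 2.

Fixpoint Q (k : nat) : mpR :=
  match k with
  | 0 => X3 1 0 0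
  | 1 => X3 1 2 0 + X3 2 1 0 *+ 2 + X3 2 0 1 + X3 3 0 0
  | (k'.+1 as k1).+1 => Q k1 * Tq - Q k' * Wq
  end.

Lemma Q0E : Q 0 = X3 1 0 0. Proof. by []. Qed.
Lemma Q1E : Q 1 = X3 1 2 0 + X3 2 1 0 *+ 2 + X3 2 0 1 + X3 3 0 0. Proof. by []. Qed.
Lemma Q_rec k : Q k.+2 = Q k.+1 * Tq - Q k * Wq. Proof. by []. Qed.

Arguments Q : simpl never.

Lemma Q2E : Q 2 = X3 1 3 1 + X3 1 4 0 + X3 2 2 1 *+ 4 + X3 2 3 0 *+ 4 + X3 3 0 2
  + X3 3 1 1 *+ 5 + X3 3 2 0 *+ 6 + X3 4 0 1 *+ 2 + X3 4 1 0 *+ 4 + X3 5 0 0.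
Proof. by rewrite Q_rec Q1E Q0E /Tq /Wq !X3E; ring. Qed.

Lemma Q_casoratian k : Q k.+2 * Q k - Q k.+1 ^+ 2 =
  Wq ^+ k * (X3 2 1 1 * (X3 1 0 0 + X3 0 1 0) ^+ 2).
Proof. by rewrite (casoratian_rec2 Q_rec) Q_rec Q1E Q0E /Tq /Wq !X3E; ring. Qed.

Lemma coef3_Q_rec k i j l : coef3 (Q k.+2) i j l =
    (if le3 0 2 0 i j l then coef3 (Q k.+1) i (j - 2) l else 0)
  + (if le3 0 1 1 i j l then coef3 (Q k.+1) i (j - 1) (l - 1) else 0)
  + (if le3 1 0 1 i j l then coef3 (Q k.+1) (i - 1) j (l - 1) else 0)
  + (if le3 1 1 0 i j l then coef3 (Q k.+1) (i - 1) (j - 1) l else 0) *+ 2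
  + (if le3 2 0 0 i j l then coef3 (Q k.+1) (i - 2) j l else 0)
  - (if le3 1 1 2 i j l then coef3 (Q k) (i - 1) (j - 1) (l - 2) else 0).
Proof. by rewrite Q_rec /Tq /Wq !mulrDr coef3B !coef3D !coef3_mulX3 !subn0 mulr2n. Qed.

Lemma coef3_Q_u0 k j l : coef3 (Q k) 0 j l = 0.
Proof.
elim/ltn_ind: k j l => -[|[|k]] IHk j l; first by rewrite coef3X3.
  by rewrite !coef3D !coef3X3.
rewrite coef3_Q_rec !if_eq0 ?subrr ?mul0rn ?addr0 //.
all: first [by rewrite /le3 => /and3P[] | move=> _; exact: IHk].
Qed.

Lemma coef3_Q_top k i j l :
  (i <= minn k 2)%N -> (k <= l)%N -> coef3 (Q k) i j l = 0.
Proof.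
elim/ltn_ind: k i j l => -[|[|[|k]]] IHk i j l le_i le_kl.
- by move: le_i; rewrite leqn0 => /eqP->; exact: coef3_Q_u0.
- by rewrite Q1E !coef3D !coef3X3_eq0 //; move=> [? ? ?]; lia.
- by rewrite Q2E !coef3D !coef3X3_eq0 //; move=> [? ? ?]; lia.
rewrite coef3_Q_rec !if_eq0 ?subrr ?mul0rn ?addr0 //.
all: rewrite /le3 => /and3P[? ? ?]; apply: IHk; lia.
Qed.

Lemma coef3_Q_u1 k : (1 <= k)%N -> coef3 (Q k) 1 k.+1 k.-1 = 1.
Proof.
elim: k => [//|[|k] IHk _]; first by rewrite Q1E !coef3D !coef3X3.
rewrite coef3_Q_rec /le3 /= subnn !coef3_Q_u0 if_same.
rewrite (@coef3_Q_top k.+1 1 _ k.+1) ?leq_min // !subn1 /= IHk //; ring.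
Qed.

Lemma coef3_Q_u2 k : (2 <= k)%N -> coef3 (Q k) 2 k k.-1 = 4.
Proof.
elim: k => [|[|[|k]] IHk] // _; first by rewrite Q2E !coef3D !coef3X3.
rewrite coef3_Q_rec /le3 /= subnn !coef3_Q_u0 !subSS !subn0.
rewrite (@coef3_Q_top k.+2 2 _ k.+2) ?(@coef3_Q_top k.+2 1 _ k.+2) //.
by rewrite IHk // (coef3_Q_u1 (k := k.+2)) // (coef3_Q_u1 (k := k.+1)).
Qed.

Lemma Q_neq0 k : Q k != 0.
Proof.
apply/eqP => Qk0; case: k Qk0 => [|k] Qk0.
  by have := coef3X3 1 0 0 1 0 0; rewrite -Q0E Qk0 /coef3 mcoeff0.
by have := coef3_Q_u1 (k := k.+1); rewrite Qk0 /coef3 mcoeff0 => /(_ isT).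
Qed.

Lemma comp_sq_X (m : 'X_{1..3}) : 'X_[m] \mPo sq_subst = 'X_[m + m].
Proof.
rewrite comp_mpolyX [RHS]mpolyXE_id; apply: eq_bigr => x _.
have -> : tnth sq_subst x = 'X_x ^+ 2.
  by case: x => -[|[|[|x]]] hx //=; congr ('X_ _ ^+ 2); apply/val_inj.
by rewrite mnmDE -exprM mul2n addnn.
Qed.

Lemma mcoeff_comp_sq (p : mpR) (m : 'X_{1..3}) : (p \mPo sq_subst)@_(m + m) = p@_m.
Proof.
rewrite comp_mpolyEX raddf_sum /= [in RHS](mpolyE p) raddf_sum /=.
apply: eq_bigr => m' _; rewrite !mcoeffZ comp_sq_X !mcoeffX.
suff -> : ((m' + m')%MM == (m + m)%MM) = (m' == m) by [].
apply/eqP/eqP => [/mnmP eq_mm | -> //].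
by apply/mnmP => x; have := eq_mm x; rewrite !mnmDE; lia.
Qed.

Lemma comp_sq_eq0 (p : mpR) : (p \mPo sq_subst == 0) = (p == 0).
Proof.
apply/eqP/eqP => [p0 | ->]; last exact: comp_mpoly0.
by apply/mpolyP => m; rewrite -mcoeff_comp_sq p0 !mcoeff0.
Qed.

Definition sqK (p : mpR) : Kfrac := toK (p \mPo sq_subst).

Lemma sqK_eq0 p : (sqK p == 0) = (p == 0).
Proof. by rewrite /sqK /toK tofrac_eq0 comp_sq_eq0. Qed.

Lemma sqKB p q : sqK (p - q) = sqK p - sqK q.
Proof. by rewrite /sqK /toK !rmorphB. Qed.

Lemma sqKD p q : sqK (p + q) = sqK p + sqK q.
Proof. by rewrite /sqK /toK !rmorphD. Qed.

Lemma sqKM p q : sqK (p * q) = sqK p * sqK q.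
Proof. by rewrite /sqK /toK !rmorphM. Qed.

Lemma sqKMn p n : sqK (p *+ n) = sqK p *+ n.
Proof. by rewrite /sqK /toK !rmorphMn. Qed.

Lemma sqKX p n : sqK (p ^+ n) = sqK p ^+ n.
Proof. by rewrite /sqK /toK !rmorphXn. Qed.

Lemma sqK_inj : injective sqK.
Proof. by move=> p q /eqP; rewrite -subr_eq0 -sqKB sqK_eq0 subr_eq0 => /eqP. Qed.

Lemma sqK_X3 a b c :
  sqK (X3 a b c) = (xK ^+ 2) ^+ a * (yK ^+ 2) ^+ b * (zK ^+ 2) ^+ c.
Proof. by rewrite /sqK /toK X3E !rmorphM !rmorphXn /= !comp_mpolyXU /= !rmorphXn. Qed.

Lemma sqK_Q_neq0 k : sqK (Q k) != 0.
Proof. by rewrite sqK_eq0 Q_neq0. Qed.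

Lemma xyzK_neq0 : [/\ xK != 0, yK != 0 & zK != 0].
Proof.
have := X3_neq0 1 1 1; rewrite -sqK_eq0 sqK_X3 !expr1.
by move=> xyz; split; apply: contraNneq xyz => ->; rewrite expr0n ?(mul0r, mulr0).
Qed.

Definition dK (k : nat) : Kfrac := xK * (xK * yK * zK ^+ 2) ^+ k.

Lemma dK_neq0 k : dK k != 0.
Proof.
case: xyzK_neq0 => x0 y0 z0.
exact: mulf_neq0 x0 (expf_neq0 _ (mulf_neq0 (mulf_neq0 x0 y0) (expf_neq0 _ z0))).
Qed.

Lemma dK_rec k : dK k.+2 * dK k = dK k.+1 ^+ 2.
Proof. by rewrite /dK !exprS; ring. Qed.

Lemma dKE n : (1 <= n)%N ->
  dK n = xK ^+ (n - 1) * yK ^+ (n.+1 - 1) * zK ^+ (n + n.+1 - 1) * xK ^+ 2.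
Proof.
case: n => // m _.
rewrite (_ : (m.+1 - 1 = m)%N); last lia.
rewrite (_ : (m.+2 - 1 = m.+1)%N); last lia.
rewrite (_ : (m.+1 + m.+2 - 1 = (m + m).+2)%N); last lia.
by rewrite /dK !exprS exprD !exprMn !expr0 expr1n; ring.
Qed.

Lemma sqK_Q_rec k : sqK (Q k.+2) * sqK (Q k) =
  sqK (Q k.+1) ^+ 2 + (dK k.+1 * ((xK ^+ 2 + yK ^+ 2) / zK)) ^+ 2.
Proof.
have := congr1 sqK (Q_casoratian k).
rewrite sqKB !sqKX !sqKM sqKD !sqK_X3 => /eqP; rewrite subr_eq => /eqP ->.
rewrite addrC /dK; congr (_ + _); case: xyzK_neq0 => _ _ z0.
have -> : sqK (Wq ^+ k) = ((xK * yK * zK ^+ 2) ^+ k) ^+ 2.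
  by rewrite sqKX sqK_X3 -[in RHS]exprM mulnC exprM; congr (_ ^+ k); ring.
rewrite [_ ^+ k.+1]exprS [in RHS]exprMn expr_div_n.
apply: (mulIf (expf_neq0 2 z0)); rewrite -[RHS]mulrA (divfK (expf_neq0 2 z0)).
ring.
Qed.

Lemma eq_rec2 (T : Type) (g : T -> T -> T) (u v : nat -> T) :
    u 0 = v 0 -> u 1 = v 1 ->
    (forall k, u k.+2 = g (u k) (u k.+1)) -> (forall k, v k.+2 = g (v k) (v k.+1)) ->
  u =1 v.
Proof.
by move=> u0 u1 u_rec v_rec; elim/ltn_ind=> -[|[|k]] IHk //; rewrite u_rec v_rec !IHk.
Qed.

Section RatioRecurrence.

Variables (F : fieldType) (s d : nat -> F) (c : F).
Hypothesis s_neq0 : forall k, s k != 0.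
Hypothesis d_neq0 : forall k, d k != 0.
Hypothesis d_rec : forall k, d k.+2 * d k = d k.+1 ^+ 2.
Hypothesis s_rec : forall k, s k.+2 * s k = s k.+1 ^+ 2 + (d k.+1 * c) ^+ 2.

Lemma ratio_rec k : s k.+2 / d k.+2 = (c ^+ 2 + (s k.+1 / d k.+1) ^+ 2) / (s k / d k).
Proof.
have sk2 : s k.+2 = (s k.+1 ^+ 2 + (d k.+1 * c) ^+ 2) / s k by rewrite -s_rec mulfK.
have dk2 : d k.+2 = d k.+1 ^+ 2 / d k by rewrite -d_rec mulfK.
by rewrite sk2 dk2; field; rewrite s_neq0 !d_neq0.
Qed.

End RatioRecurrence.

(* Stated over an arbitrary field: [field] does not terminate in reasonable
   time on the concrete field [Kfrac]. *)
Lemma markov_base_identity (F : fieldType) (x y z : F) :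
    x != 0 -> y != 0 -> z != 0 ->
  (x ^+ 2 + ((x ^+ 2 + y ^+ 2) / z) ^+ 2) / y =
  (x ^+ 2 * y ^+ 4 + (x ^+ 4 * y ^+ 2) *+ 2 + x ^+ 4 * z ^+ 2 + x ^+ 6)
    / (x * (x * y * z ^+ 2)).
Proof. by move=> x0 y0 z0; field; rewrite x0 y0 z0. Qed.

Section MarkovDiagonal.

Variable M : nat -> nat -> Kfrac.
Hypothesis HM : is_markov_family M.

Lemma markov_diag_rec k :
  M k.+2 k.+3 = (M 1 1 ^+ 2 + M k.+1 k.+2 ^+ 2) / M k k.+1.
Proof.
case: HM => _ _ _ M_rec.
have kk1 : in_markov_set k k.+1 by rewrite /in_markov_set leqnSn coprimenS.
have unim : unimodular k k.+1 1 1 by right; lia.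
have le_kk1 : (k + 2 * 1 <= k.+1 + 2 * 1)%N by lia.
have := M_rec k k.+1 1 1 kk1 isT unim isT le_kk1.
by rewrite !addn1 !muln1 !addn2.
Qed.

Lemma markov_diagE k : M k k.+1 = sqK (Q k) / dK k.
Proof.
case: (HM) => M10 M01 M11 M_rec; case: xyzK_neq0 => x0 y0 z0.
move: k; apply: (eq_rec2 (g := fun a b => (M 1 1 ^+ 2 + b ^+ 2) / a)).
- by rewrite M01 Q0E sqK_X3 /dK !expr0 !mulr1 expr1 expr2 (mulfK x0).
- have -> : M 1 2 = (M 0 1 ^+ 2 + M 1 1 ^+ 2) / M 1 0 :=
    M_rec 1 0 0 1 isT isT (or_introl erefl) isT isT.
  rewrite M10 M01 M11 Q1E 3!sqKD sqKMn !sqK_X3 /dK !expr1 !expr0 !mulr1 -!exprM.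
  exact: (markov_base_identity x0 y0 z0).
- exact: markov_diag_rec.
- by move=> k; rewrite M11; exact: (ratio_rec sqK_Q_neq0 dK_neq0 dK_rec sqK_Q_rec k).
Qed.

Lemma markov_numerator_diag n P : (1 <= n)%N ->
  is_markov_numerator M n n.+1 P -> P * X3 1 0 0 = Q n.
Proof.
move=> n1 [_ MP]; apply: sqK_inj.
move: (markov_diagE n) (dK_neq0 n); rewrite MP -/(sqK P) (dKE n1).
set B := _ * _ * _ => PQ BX0.
have B0 : B != 0 by apply: contraNneq BX0 => ->; rewrite !mul0r.
rewrite -[RHS](divfK BX0) -PQ mulrA (divfK B0) sqKM sqK_X3.
by rewrite !expr1 !expr0 !mulr1.
Qed.

End MarkovDiagonal.

Theorem theorem9p1 (M : nat -> nat -> Kfrac) (HM : is_markov_family M)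
    (n : nat) (hn : (2 <= n)%N) (P : mpR)
    (HP : is_markov_numerator M n n.+1 P) :
  P@_[multinom [tuple 1%N; n; n.-1]] = 4.
Proof.
change (coef3 P 1 n n.-1 = 4).
have := coef3_mulX3 P 1 0 0 2 n n.-1.
rewrite (markov_numerator_diag HM (ltnW hn) HP) coef3_Q_u2 //.
by rewrite /le3 !leq0n !subn0 /= => <-.
Qed.
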